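(* Let $L$ be a finite nonassociative C-loop of order $n$ whose nucleus $N$ has order $m$. Then (i) $n/m\equiv 2 \pmod 6$ or $n/m\equiv 4\pmod 6$; (ii) $n$ is even; (iii) if $n=p^k$ for a prime $p$ and positive integer $k$, then $p=2$ and $k>3$. Moreover, for every integer $k>3$ there exists a nonassociative C-loop of order $2^k$ that is not a Steiner loop.
   Context: A C-loop is a loop satisfying $x(y(yz))=((xy)y)z$ for all $x,y,z$. The nucleus of a loop is the set of elements $a$ with $a(yz)=(ay)z$, $y(az)=(ya)z$, $y(za)=(yz)a$ for all $y,z$. A Steiner loop is a loop with neutral element $e$ satisfying $xx=e$, $(yx)x=y$, $xy=yx$ for all $x,y$. *)

From mathcomp Require Import all_boot.
Set Implicit Arguments. Unset Strict Implicit. Unset Printing Implicit Defensive.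

Section Loops.
Variable T : finType.
Variable mul : T -> T -> T.
Variable e : T.

Definition is_loop : Prop :=
  (forall a, bijective (mul a)) /\ (forall a, bijective (fun x => mul x a)) /\
  (forall x, mul e x = x /\ mul x e = x).

Definition is_C_loop : Prop :=
  is_loop /\ forall x y z, mul x (mul y (mul y z)) = mul (mul (mul x y) y) z.

Definition associative_op : Prop :=
  forall x y z, mul x (mul y z) = mul (mul x y) z.

Definition nucleus : {set T} :=
  [set a | [forall y, forall z,
     [&& mul a (mul y z) == mul (mul a y) z,
         mul y (mul a z) == mul (mul y a) z &
         mul y (mul z a) == mul (mul y z) a]]].

Definition is_Steiner_loop : Prop :=
  is_loop /\ forall x y, mul x x = e /\ mul (mul y x) x = y /\ mul x y = mul y x.
End Loops.

From mathcomp Require Import all_boot zify.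
Set Implicit Arguments. Unset Strict Implicit. Unset Printing Implicit Defensive.

(* The nucleus N of a C-loop L is a normal subloop containing every square (a
   consequence of the C-law), so L/N is a Steiner loop.  Its order n/m is even,
   since x |-> x a is a fixed-point-free involution for a <> 1, and prime to 3,
   since (x, y) |-> (y, x y) permutes the pairs of distinct nonidentity elements
   in 3-cycles; this gives (i) and (ii).  For (iii) it suffices that C-loops of
   order at most 8 are associative.  If x (y z) <> (x y) z, then N, x N and y N
   are distinct cosets, so m <= 2; then N is central of exponent 2, which makes
   x y N and z N two further cosets, so N = 1 and L is a Steiner loop of order 8,
   hence a group.  The examples of order 2^k are products of Z_2^(k-4) with a
   nonassociative C-loop of order 16. *)

Lemma prime_dvd_card_fixfree (U : finType) (f : U -> U) (A : {set U}) p :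
  prime p -> {in A, forall x, f x \in A} -> {in A, forall x, iter p f x = x} ->
  {in A, forall x, f x != x} -> p %| #|A|.
Proof.
move=> p_pr; have p_gt0 := prime_gt0 p_pr.
elim: {A}#|A|.+1 {-2}A (ltnSn #|A|) => // N IHN A leAN fA fpK fxx.
have [->|[x xA]] := set_0Vmem A; first by rewrite cards0.
have iterA n : {in A, forall y, iter n f y \in A}.
  by elim: n => // n IHn y /IHn /fA.
have iter_mod n : {in A, forall y, iter n f y = iter (n %% p) f y}.
  move=> y yA; rewrite {1}(divn_eq n p) iterD iterM.
  by apply: iter_fix; apply/fpK/iterA.
have orbit_inj : injective (fun i : 'I_p => iter i f x).
  suff le_inj (i j : 'I_p) : i <= j -> iter i f x = iter j f x -> i = j :> nat.
    move=> i j Eij; apply/val_inj.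
    by case: (leqP i j) => [/le_inj/(_ Eij) | /ltnW/le_inj/(_ (esym Eij))/esym].
  move=> le_ij Eij; apply/eqP; rewrite eqn_leq le_ij leqNgt; apply/negP => lt_ij.
  set y := iter j f x; have yA : y \in A by apply: iterA.
  have d_gt0 : 0 < j - i by rewrite subn_gt0.
  have yd : iter (j - i) f y = y by rewrite /y -{1}Eij -iterD subnK.
  have [km kn Ebez _] := egcdnP p d_gt0.
  have /eqP gcd1 : gcdn (j - i) p == 1.
    rewrite gcdnC -/(coprime p (j - i)) prime_coprime // gtnNdvd //.
    exact: leq_ltn_trans (leq_subr i j) (ltn_ord j).
  move/eqP: (fxx y yA); apply.
  by rewrite -[in RHS](iter_fix km yd) -iterM Ebez gcd1 addn1 iterSr iter_mod ?fA ?modnMl.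
set B := [set iter i f x | i : 'I_p].
have sBA : B \subset A by apply/subsetP => _ /imsetP[i _ ->]; apply: iterA.
have cardB : #|B| = p by rewrite card_imset // card_ord.
have : p %| #|A :\: B|.
  apply: IHN => [|y|y|y]; rewrite ?inE.
  - have A_gt0 : 0 < #|A| by apply/card_gt0P; exists x.
    by rewrite cardsD (setIidPr sBA) cardB; lia.
  - move=> /andP[yB yA]; rewrite fA // andbT; apply: contra yB => /imsetP[i _ Ei].
    apply/imsetP; exists (Ordinal (ltn_pmod (p.-1 + i) p_gt0)) => //=.
    by rewrite -iter_mod // iterD -Ei -iterSr prednK // fpK.
  - by case/andP=> _; apply: fpK.
  - by case/andP=> _; apply: fxx.
rewrite cardsD (setIidPr sBA) cardB => dvd_p.
by rewrite -(subnK (subset_leq_card sBA)) cardB dvdn_add.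
Qed.

Lemma uniq_leq_card (U : finType) (A : {pred U}) (s : seq U) :
  uniq s -> {subset s <= A} -> size s <= #|A|.
Proof. by move=> Us sA; rewrite -(card_uniqP Us); apply/subset_leq_card/subsetP. Qed.

Lemma card_offdiag (U : finType) (A : {set U}) :
  #|[set u : U * U | [&& u.1 \in A, u.2 \in A & u.1 != u.2]]| = #|A| * #|A|.-1.
Proof.
have -> : [set u : U * U | [&& u.1 \in A, u.2 \in A & u.1 != u.2]] =
          setX A A :\: [set (x, x) | x in A].
  apply/setP => -[x y]; rewrite !inE /=; apply/idP/idP.
    by case/and3P=> -> -> xy; rewrite !andbT; apply: contra xy => /imsetP[z _ [-> ->]].
  case/and3P=> ndiag xA ->; rewrite xA; apply: contra ndiag => /eqP <-.
  by apply/imsetP; exists x.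
rewrite cardsD (setIidPr _); last by apply/subsetP => _ /imsetP[x xA ->]; rewrite !inE xA.
by rewrite cardsX card_imset => [|x y [] //]; rewrite -subn1 mulnBr muln1.
Qed.

Section SteinerLoop.
Variables (S : finType) (op : S -> S -> S) (one : S).
Hypothesis HS : is_Steiner_loop op one.
Local Notation "x ** y" := (op x y) (at level 40, left associativity).

Lemma steiner_mulxx x : x ** x = one. Proof. by case: HS => _ /(_ x x) [-> _]. Qed.
Lemma steiner_mulKr x y : (y ** x) ** x = y. Proof. by case: HS => _ /(_ x y) [_ [-> _]]. Qed.
Lemma steiner_mulC x y : x ** y = y ** x. Proof. by case: HS => _ /(_ x y) [_ [_ ->]]. Qed.
Lemma steiner_mulK x y : x ** (x ** y) = y.
Proof. by rewrite steiner_mulC [x ** y]steiner_mulC steiner_mulKr. Qed.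
Lemma steiner_mulKC x y : y ** (x ** y) = x.
Proof. by rewrite (steiner_mulC x) steiner_mulK. Qed.
Lemma steiner_mulKrC x y : (x ** y) ** x = y.
Proof. by rewrite (steiner_mulC x) steiner_mulKr. Qed.
Lemma steiner_mul1 x : one ** x = x. Proof. by case: HS => [[_ [_ /(_ x) [-> _]]] _]. Qed.
Lemma steiner_mul1r x : x ** one = x. Proof. by rewrite steiner_mulC steiner_mul1. Qed.
Lemma steiner_mulI x : injective (op x). Proof. exact: can_inj (steiner_mulK x). Qed.
Lemma steiner_mulIr x : injective (op^~ x).
Proof. exact: (@can_inj _ _ _ (op^~ x) (steiner_mulKr x)). Qed.

Lemma steiner_card_even : 1 < #|S| -> ~~ odd #|S|.
Proof.
move=> /card_gt1P[u [v [_ _ uv]]]; have [a a1] : exists a, a != one.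
  by case: (eqVneq u one) => [u1|]; [exists v; rewrite -u1 eq_sym | exists u].
rewrite -dvdn2 -cardsT; apply: (@prime_dvd_card_fixfree _ (op^~ a)) => // x _.
  exact: steiner_mulKr.
by apply: contra a1 => /eqP/(congr1 (op x)); rewrite steiner_mulK steiner_mulxx => ->.
Qed.

Lemma steiner_card_mod6 : 1 < #|S| -> #|S| %% 6 = 2 \/ #|S| %% 6 = 4.
Proof.
move=> S_gt1; have := steiner_card_even S_gt1; rewrite -dvdn2.
set D := [set u : S * S | [&& u.1 \in [set~ one], u.2 \in [set~ one] & u.1 != u.2]].
have : 3 %| #|D|.
  apply: (@prime_dvd_card_fixfree _ (fun u => (u.2, u.1 ** u.2))) => // -[x y];
    rewrite !inE /= => /and3P[x1 y1 xy].
  - rewrite y1 /=; apply/andP; split.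
      by apply: contra xy => /eqP/(congr1 (op x)); rewrite steiner_mulK steiner_mul1r => <-.
    by apply: contra x1 => /eqP/(congr1 (op^~ y)); rewrite steiner_mulxx steiner_mulKr => ->.
  - by rewrite /= (steiner_mulC x y) !steiner_mulK steiner_mulKr.
  - by apply: contraNneq xy => -[->].
rewrite card_offdiag cardsC1 Euclid_dvdM // => /orP[] ? ?; lia.
Qed.

Lemma steiner_card8_assoc : #|S| = 8 -> associative_op op.
Proof.
move=> S8 x y z.
have [-> | x1] := eqVneq x one; first by rewrite !steiner_mul1.
have [-> | y1] := eqVneq y one; first by rewrite steiner_mul1 steiner_mul1r.
have [<- | xy] := eqVneq x y; first by rewrite steiner_mulK steiner_mulxx steiner_mul1.
(* H = {1, x, y, xy} is a subloop of order 4; z H is its complement and contains x (y z). *)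
pose H := [set a in [:: one; x; y; x ** y]].
have H_closed : {in H &, forall a b, a ** b \in H}.
  move=> a b; rewrite !inE => /or4P[]/eqP-> /or4P[]/eqP->;
  by rewrite ?(steiner_mul1, steiner_mul1r, steiner_mulxx, steiner_mulK, steiner_mulKr,
               steiner_mulKC, steiner_mulKrC, (steiner_mulC y x), eqxx, orbT).
have [zH | zNH] := boolP (z \in H).
  move: zH; rewrite !inE => /or4P[]/eqP->.
  - by rewrite !steiner_mul1r.
  - by rewrite (steiner_mulC y) steiner_mulK steiner_mulKrC.
  - by rewrite steiner_mulxx steiner_mul1r steiner_mulKr.
  - by rewrite steiner_mulKC !steiner_mulxx.
have cardH : #|H| = 4.
  rewrite cardsE; apply/card_uniqP; rewrite /= !inE !negb_or !(eq_sym one) x1 y1 xy andbT /=.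
  apply/and3P; split.
  - by apply: contra xy => /eqP/(congr1 (op x)); rewrite steiner_mulK steiner_mul1r => ->.
  - by apply: contra y1 => /eqP/(congr1 (op x)); rewrite steiner_mulK steiner_mulxx => ->.
  - by apply: contra x1 => /eqP/(congr1 (op^~ y)); rewrite steiner_mulKr steiner_mulxx => ->.
have zH_disjoint : [disjoint H & op z @: H].
  rewrite disjoints_subset; apply/subsetP => a aH; rewrite inE; apply/imsetP => -[b bH Eab].
  by move: zNH; rewrite -(steiner_mulKr b z) -Eab H_closed.
have H_cover : H :|: op z @: H = setT.
  apply/eqP; rewrite eqEcard subsetT cardsT S8 cardsU (disjoint_setI0 zH_disjoint).
  by rewrite cards0 subn0 card_imset ?cardH //; apply: steiner_mulI.
have : x ** (y ** z) \in op z @: H.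
  move: (in_setT (x ** (y ** z))); rewrite -H_cover inE => /orP[] // WH.
  have xH : x \in H by rewrite !inE eqxx orbT.
  have yH : y \in H by rewrite !inE eqxx !orbT.
  have yzH : y ** z \in H by rewrite -(steiner_mulK x (y ** z)) H_closed.
  by case/negP: zNH; rewrite -(steiner_mulK y z) H_closed.
case/imsetP => h; rewrite !inE => /or4P[]/eqP-> EW.
- case/negP: xy; apply/eqP; apply: (@steiner_mulIr z).
  by rewrite -[y ** z](steiner_mulK x) EW steiner_mul1r.
- case/negP: y1; apply/eqP; apply: (@steiner_mulIr z); apply: (@steiner_mulI x).
  by rewrite EW steiner_mul1 steiner_mulC.
- case/negP: x1; apply/eqP; apply: (@steiner_mulIr (y ** z)).
  by rewrite EW steiner_mul1 steiner_mulC.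
- by rewrite EW steiner_mulC.
Qed.
End SteinerLoop.

Section CLoop.
Variables (T : finType) (mul : T -> T -> T) (e : T).
Hypothesis HC : is_C_loop mul e.
Local Notation "x ** y" := (mul x y) (at level 40, left associativity).

Lemma mul1x x : e ** x = x. Proof. by case: HC => -[_ [_ /(_ x) []]]. Qed.
Lemma mulx1 x : x ** e = x. Proof. by case: HC => -[_ [_ /(_ x) []]]. Qed.
Lemma mulcI a : injective (mul a). Proof. by case: HC => -[/(_ a) /bij_inj]. Qed.
Lemma mulcIr a : injective (mul^~ a). Proof. by case: HC => -[_ [/(_ a) /bij_inj]]. Qed.
Lemma ldiv_exists a w : exists x, a ** x = w.
Proof. by case: HC => -[/(_ a) [g _ gK] _] _; exists (g w); rewrite gK. Qed.
Lemma rdiv_exists a w : exists x, x ** a = w.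
Proof. by case: HC => -[_ [/(_ a) [g _ gK] _]] _; exists (g w); rewrite gK. Qed.
Lemma C_law x y z : x ** (y ** (y ** z)) = ((x ** y) ** y) ** z.
Proof. by case: HC. Qed.
Lemma left_alternative y z : y ** (y ** z) = (y ** y) ** z.
Proof. by have := C_law e y z; rewrite !mul1x. Qed.
Lemma right_alternative x y : (x ** y) ** y = x ** (y ** y).
Proof. by have := C_law x y e; rewrite !mulx1. Qed.

Definition invc x := odflt e [pick y | x ** y == e].

Lemma mulcV x : x ** invc x = e.
Proof.
rewrite /invc; case: pickP => [y /eqP // | noinv].
by have [y xy] := ldiv_exists x e; move: (noinv y); rewrite xy eqxx.
Qed.

Lemma mulcK w y : (w ** y) ** invc y = w.
Proof. by have [x <-] := rdiv_exists y w; rewrite -C_law mulcV mulx1. Qed.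

Lemma mulKc y u : invc y ** (y ** u) = u.
Proof.
have [l ly] := rdiv_exists y e.
have lK u' : l ** (y ** u') = u'.
  by have [z <-] := ldiv_exists y u'; rewrite C_law ly mul1x.
by have := mulcK l y; rewrite ly mul1x => ->.
Qed.

Lemma mulVc x : invc x ** x = e. Proof. by have := mulKc x e; rewrite mulx1. Qed.
Lemma invcK x : invc (invc x) = x.
Proof. by apply: (@mulcI (invc x)); rewrite mulcV mulVc. Qed.
Lemma mulKVc y u : y ** (invc y ** u) = u.
Proof. by have := mulKc (invc y) u; rewrite invcK. Qed.
Lemma mulcKV w y : (w ** invc y) ** y = w.
Proof. by have := mulcK w (invc y); rewrite invcK. Qed.
Lemma invMc x y : invc (x ** y) = invc y ** invc x.
Proof.
have <- : invc (x ** y) ** x = invc y by rewrite -{2}(mulcK x y) mulKc.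
by rewrite mulcK.
Qed.
Lemma invc_inj : injective invc. Proof. exact: can_inj invcK. Qed.
Lemma invc1 : invc e = e. Proof. by have := mulcV e; rewrite mul1x. Qed.

Definition mid_nuclear a := forall x z, x ** (a ** z) = (x ** a) ** z.

Lemma mid_nuclear1 : mid_nuclear e.
Proof. by move=> x z; rewrite mul1x mulx1. Qed.

Lemma sqr_mid_nuclear y : mid_nuclear (y ** y).
Proof. by move=> x z; rewrite -left_alternative -right_alternative C_law. Qed.

Lemma mid_nuclearV a : mid_nuclear a -> mid_nuclear (invc a).
Proof. by move=> Na u v; apply: invc_inj; rewrite !invMc !invcK Na. Qed.

Lemma mid_nuclear_assocl a : mid_nuclear a -> forall x y, a ** (x ** y) = (a ** x) ** y.
Proof.
move=> Na x y; set u := a ** (x ** y).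
have : invc x ** (invc a ** u) = y by rewrite !mulKc.
by rewrite (mid_nuclearV Na) -invMc => <-; rewrite mulKVc.
Qed.

Lemma mid_nuclear_assocr a : mid_nuclear a -> forall x y, x ** (y ** a) = (x ** y) ** a.
Proof.
move=> Na x y; set u := (x ** y) ** a.
have : (u ** invc a) ** invc y = x by rewrite !mulcK.
by rewrite -(mid_nuclearV Na) -invMc => <-; rewrite mulcKV.
Qed.

Lemma mid_nuclearM a b : mid_nuclear a -> mid_nuclear b -> mid_nuclear (a ** b).
Proof.
by move=> Na Nb x z; rewrite -(mid_nuclear_assocl Na) Na Nb (mid_nuclear_assocr Nb).
Qed.

Lemma invc_sqr x : invc x = x ** invc (x ** x).
Proof. by rewrite -{2}(mulKc x x) mulcK. Qed.

Lemma mid_nuclear_conj a x : mid_nuclear a -> mid_nuclear ((x ** a) ** invc x).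
Proof.
move=> Na; have Nsqr := sqr_mid_nuclear.
have -> : (x ** a) ** invc x = ((x ** a) ** (x ** a)) ** invc a ** invc (x ** x).
  rewrite invc_sqr (mid_nuclear_assocr (mid_nuclearV (Nsqr x))).
  by rewrite (mid_nuclear_assocr Na) mulcK.
apply: mid_nuclearM; last exact/mid_nuclearV/Nsqr.
by apply: mid_nuclearM; [exact: Nsqr | exact: mid_nuclearV].
Qed.

Lemma nucleusP a : reflect (mid_nuclear a) (a \in nucleus mul).
Proof.
apply: (iffP idP) => [|Na].
  by rewrite inE => /forallP nucl x z; have /forallP/(_ z)/and3P[_ /eqP] := nucl x.
rewrite inE; apply/forallP => y; apply/forallP => z.
by rewrite (mid_nuclear_assocl Na) Na (mid_nuclear_assocr Na) !eqxx.
Qed.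

Lemma nucleus1 : e \in nucleus mul.
Proof. exact/nucleusP/mid_nuclear1. Qed.

Definition nuc_rel x y := y ** invc x \in nucleus mul.

Lemma nuc_relP x y : reflect (exists2 a, mid_nuclear a & y = a ** x) (nuc_rel x y).
Proof.
rewrite /nuc_rel; apply: (iffP (@nucleusP (y ** invc x))) => [Na | [a Na ->]].
  by exists (y ** invc x); rewrite ?mulcKV.
by rewrite mulcK.
Qed.

Lemma nuc_rel_refl x : nuc_rel x x.
Proof. by apply/nuc_relP; exists e; rewrite ?mul1x //; apply: mid_nuclear1. Qed.

Lemma nuc_rel_trans x y z : nuc_rel x y -> nuc_rel y z -> nuc_rel x z.
Proof.
case/nuc_relP=> a Na ->; case/nuc_relP=> b Nb ->; apply/nuc_relP.
by exists (b ** a); [apply: mid_nuclearM | rewrite (mid_nuclear_assocl Nb)].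
Qed.

Lemma nuc_rel_sym x y : nuc_rel x y -> nuc_rel y x.
Proof. by move/nucleusP/mid_nuclearV; rewrite invMc invcK => /nucleusP. Qed.

Lemma nuc_rel_equiv : {in [set: T] & &, equivalence_rel nuc_rel}.
Proof.
move=> x y z _ _ _; split=> [|xy]; first exact: nuc_rel_refl.
by apply/idP/idP; [apply/nuc_rel_trans/nuc_rel_sym | apply: nuc_rel_trans].
Qed.

Lemma conj_mid_nuclear a x : mid_nuclear a -> exists2 b, mid_nuclear b & x ** a = b ** x.
Proof.
by move=> Na; exists ((x ** a) ** invc x); [apply: mid_nuclear_conj | rewrite mulcKV].
Qed.

Lemma nuc_relM u u' v v' : nuc_rel u u' -> nuc_rel v v' -> nuc_rel (u ** v) (u' ** v').
Proof.
case/nuc_relP=> a Na ->; case/nuc_relP=> b Nb ->; apply/nuc_relP.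
have [b' Nb' ub] := conj_mid_nuclear u Nb.
exists (a ** b'); first exact: mid_nuclearM.
by rewrite -(mid_nuclear_assocl Na) Nb ub -(mid_nuclear_assocl Nb') (mid_nuclear_assocl Na).
Qed.

Lemma nuc_rel_left a y : mid_nuclear a -> nuc_rel y (a ** y).
Proof. by move=> Na; apply/nuc_relP; exists a. Qed.

Lemma nuc_rel_right a y : mid_nuclear a -> nuc_rel y (y ** a).
Proof. by move=> /(conj_mid_nuclear y)[b Nb ->]; apply: nuc_rel_left. Qed.

Definition Ncoset x := [set y in [set: T] | nuc_rel x y].
Definition cosets := equivalence_partition nuc_rel [set: T].

Lemma Ncoset_in x : Ncoset x \in cosets.
Proof. exact: imset_f. Qed.

Lemma in_Ncoset x y : (y \in Ncoset x) = nuc_rel x y.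
Proof. by rewrite !inE. Qed.

Lemma eq_Ncoset x y : (Ncoset x == Ncoset y) = nuc_rel x y.
Proof.
apply/eqP/idP => [Exy | xy]; first by rewrite -in_Ncoset Exy in_Ncoset nuc_rel_refl.
apply/setP => z; rewrite !in_Ncoset; apply/idP/idP; last exact: nuc_rel_trans.
exact/nuc_rel_trans/nuc_rel_sym.
Qed.

Lemma card_Ncoset x : #|Ncoset x| = #|nucleus mul|.
Proof.
have -> : Ncoset x = [set a ** x | a in nucleus mul].
  apply/setP => y; rewrite in_Ncoset; apply/nuc_relP/imsetP => -[a /nucleusP Na ->];
  by exists a.
by rewrite card_imset //; apply: mulcIr.
Qed.

Lemma card_cosets : #|T| = #|cosets| * #|nucleus mul|.
Proof.
rewrite -cardsT (card_partition (equivalence_partitionP nuc_rel_equiv)).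
by rewrite -sum_nat_const; apply: eq_bigr => _ /imsetP[x _ ->]; apply: card_Ncoset.
Qed.

Definition quo := {X : {set T} | X \in cosets}.
Definition qmap x : quo := exist _ (Ncoset x) (Ncoset_in x).
Definition rep (X : quo) := odflt e [pick y in val X].
Definition quo_mul (X Y : quo) := qmap (rep X ** rep Y).
Definition quo1 := qmap e.

Lemma eq_qmap x y : (qmap x == qmap y) = nuc_rel x y.
Proof. exact: eq_Ncoset. Qed.

Lemma qmap_rep X : qmap (rep X) = X.
Proof.
apply: val_inj => /=; have /imsetP[x _ Xx] := valP X.
have : rep X \in val X.
  by rewrite /rep; case: pickP => [// | /(_ x)]; rewrite Xx in_Ncoset nuc_rel_refl.
by rewrite -[sval X]/(val X) Xx in_Ncoset -eq_Ncoset => /eqP.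
Qed.

Lemma qmapM x y : quo_mul (qmap x) (qmap y) = qmap (x ** y).
Proof.
apply/eqP; rewrite eq_qmap; apply: nuc_relM; apply: nuc_rel_sym.
  by rewrite -eq_qmap qmap_rep.
by rewrite -eq_qmap qmap_rep.
Qed.

Lemma qmap_eq1 x : (qmap x == quo1) = (x \in nucleus mul).
Proof. by rewrite eq_sym eq_qmap /nuc_rel invc1 mulx1. Qed.

Lemma quo_Steiner : is_Steiner_loop quo_mul quo1.
Proof.
have qmap_surj X : exists x, X = qmap x by exists (rep X); rewrite qmap_rep.
have mulK X Y : quo_mul X (quo_mul X Y) = Y.
  have [[x ->] [y ->]] := (qmap_surj X, qmap_surj Y).
  rewrite !qmapM left_alternative; apply/eqP; rewrite eq_qmap.
  exact/nuc_rel_sym/nuc_rel_left/sqr_mid_nuclear.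
have mulKr X Y : quo_mul (quo_mul Y X) X = Y.
  have [[x ->] [y ->]] := (qmap_surj X, qmap_surj Y).
  rewrite !qmapM right_alternative; apply/eqP; rewrite eq_qmap.
  exact/nuc_rel_sym/nuc_rel_right/sqr_mid_nuclear.
have mul1 X : quo_mul quo1 X = X by have [x ->] := qmap_surj X; rewrite qmapM mul1x.
have mulxx X : quo_mul X X = quo1.
  have [x ->] := qmap_surj X; apply/eqP; rewrite qmapM qmap_eq1.
  exact/nucleusP/sqr_mid_nuclear.
have mulC X Y : quo_mul X Y = quo_mul Y X.
  have YXX : quo_mul (quo_mul X Y) X = Y by rewrite -{2}(mulKr Y X) mulK.
  by rewrite -{2}YXX mulKr.
have mul1r X : quo_mul X quo1 = X by rewrite mulC mul1.
split; last by move=> X Y; rewrite mulxx mulKr mulC.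
split; [move=> X | split; [move=> X | by move=> X; rewrite mul1 mul1r]].
  by exists (quo_mul X) => Y; rewrite mulK.
by exists (quo_mul^~ X) => Y; rewrite mulKr.
Qed.

Lemma card_quo : #|T| = #|{: quo}| * #|nucleus mul|.
Proof. by rewrite card_sig card_cosets. Qed.

Lemma assoc_nuclear x y z :
  [|| x \in nucleus mul, y \in nucleus mul | z \in nucleus mul] ->
  x ** (y ** z) = (x ** y) ** z.
Proof.
by case/or3P=> /nucleusP N; [apply: mid_nuclear_assocl | apply: N | apply: mid_nuclear_assocr].
Qed.

Lemma assoc_nuc_rel_xy x y z : nuc_rel x y -> x ** (y ** z) = (x ** y) ** z.
Proof.
case/nuc_relP=> a Na ->; have [b Nb xa] := conj_mid_nuclear x Na.
rewrite -(mid_nuclear_assocl Na) !Na xa.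
by rewrite -!(mid_nuclear_assocl Nb) left_alternative.
Qed.

Lemma assoc_nuc_rel_yz x y z : nuc_rel y z -> x ** (y ** z) = (x ** y) ** z.
Proof.
case/nuc_relP=> b Nb ->; have [b' Nb' yb] := conj_mid_nuclear y Nb.
rewrite Nb yb -(mid_nuclear_assocl Nb') Nb' Nb -(mid_nuclear_assocr Nb) yb Nb'.
by rewrite right_alternative.
Qed.

Lemma card_quo_ge3 : ~ associative_op mul -> 2 < #|{: quo}|.
Proof.
move=> NA; rewrite ltnNge; apply: contra_notN NA => le2 x y z.
apply/eqP; apply: contraTT le2 => nassoc; rewrite -ltnNge.
suff Us : uniq [:: quo1; qmap x; qmap y] by apply: uniq_leq_card Us _.
  rewrite /= !inE !negb_or andbT !(eq_sym quo1) !qmap_eq1 eq_qmap.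
  rewrite -andbA; apply/and3P; split; apply: contra nassoc => Nxy; apply/eqP.
  - by apply: assoc_nuclear; rewrite Nxy.
  - by apply: assoc_nuclear; rewrite Nxy orbT.
  - exact: assoc_nuc_rel_xy.
Qed.

Lemma nuc_rel_comm u v : nuc_rel (u ** v) (v ** u).
Proof. by rewrite -eq_qmap -!qmapM (steiner_mulC quo_Steiner). Qed.

Lemma mul_nuclear_nuc_rel x y : x ** y \in nucleus mul -> nuc_rel x y.
Proof.
rewrite -qmap_eq1 -eq_qmap -qmapM => /eqP xy1.
by rewrite -[qmap y](steiner_mulK quo_Steiner (qmap x)) xy1 (steiner_mul1r quo_Steiner).
Qed.

Lemma nuc_rel_mull x y : nuc_rel x (x ** y) -> y \in nucleus mul.
Proof.
rewrite -eq_qmap -qmapM -qmap_eq1 => /eqP x_xy.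
by rewrite -[qmap y](steiner_mulK quo_Steiner (qmap x)) -x_xy (steiner_mulxx quo_Steiner).
Qed.

Lemma nuc_rel_mulr x y : nuc_rel y (x ** y) -> x \in nucleus mul.
Proof.
rewrite -eq_qmap -qmapM -qmap_eq1 => /eqP y_xy.
by rewrite -[qmap x](steiner_mulKr quo_Steiner (qmap y)) -y_xy (steiner_mulxx quo_Steiner).
Qed.

Section SmallNucleus.
Hypothesis small_nucleus : #|nucleus mul| <= 2.

Lemma small_nucleus_cases a b :
  mid_nuclear a -> mid_nuclear b -> a != e -> b = e \/ b = a.
Proof.
move=> /nucleusP Na /nucleusP Nb ae; have [-> | be] := eqVneq b e; [by left | right].
apply/eqP; apply: contraTT small_nucleus => ba; rewrite -ltnNge.
have sub : {subset [:: e; a; b] <= nucleus mul}.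
  by move=> c; rewrite !in_cons in_nil orbF => /or3P[]/eqP-> //; apply: nucleus1.
apply: (uniq_leq_card _ sub).
by rewrite /= !inE !negb_or (eq_sym e) ae (eq_sym e) be eq_sym ba.
Qed.

Lemma nuclear_sqr a : mid_nuclear a -> a ** a = e.
Proof.
move=> Na; have [-> | ae] := eqVneq a e; first by rewrite mul1x.
have [// | aa_a] := small_nucleus_cases Na (mid_nuclearM Na Na) ae.
by case/eqP: ae; apply: (@mulcI a); rewrite aa_a mulx1.
Qed.

Lemma nuclear_central a x : mid_nuclear a -> x ** a = a ** x.
Proof.
move=> Na; have [-> | ae] := eqVneq a e; first by rewrite mul1x mulx1.
have [b Nb xa] := conj_mid_nuclear x Na.
have [b1 | ba] := small_nucleus_cases Na Nb ae; last by rewrite xa ba.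
by case/eqP: ae; apply: (@mulcI x); rewrite xa b1 mul1x mulx1.
Qed.

Lemma nuclear_inv a : mid_nuclear a -> invc a = a.
Proof. by move=> Na; apply: (@mulcI a); rewrite mulcV nuclear_sqr. Qed.

Lemma mulc_nuclearCA a x y : mid_nuclear a -> x ** (a ** y) = a ** (x ** y).
Proof. by move=> Na; rewrite Na (@nuclear_central a x Na) -(mid_nuclear_assocl Na). Qed.

Lemma nuclearK a x : mid_nuclear a -> a ** (a ** x) = x.
Proof. by move=> Na; rewrite (mid_nuclear_assocl Na) nuclear_sqr // mul1x. Qed.

Lemma flexible u v : u ** (v ** u) = (u ** v) ** u.
Proof.
have /nuc_relP[c Nc vu] := nuc_rel_comm u v.
rewrite vu mulc_nuclearCA // left_alternative -(nuclear_central v (sqr_mid_nuclear u)).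
by rewrite -right_alternative vu -(mid_nuclear_assocl Nc) nuclearK.
Qed.

Lemma invc_nuclear_sqr x : invc x = (x ** x) ** x.
Proof.
rewrite invc_sqr nuclear_inv; last exact: sqr_mid_nuclear.
exact: nuclear_central x (sqr_mid_nuclear x).
Qed.

Lemma assoc_x_y_xy u v : u ** (v ** (u ** v)) = (u ** v) ** (u ** v).
Proof.
have /nuc_relP[c Nc uv] := nuc_rel_comm v u.
have vu : v ** u = c ** (u ** v) by rewrite uv nuclearK.
have [Nu Nv] := (sqr_mid_nuclear u, sqr_mid_nuclear v).
pose d := c ** ((v ** v) ** (u ** u)).
have Nd : mid_nuclear d by apply: mid_nuclearM => //; apply: mid_nuclearM.
have -> : u ** (v ** (u ** v)) = d.
  by rewrite uv !(mulc_nuclearCA _ _ Nc) left_alternative (mulc_nuclearCA _ _ Nv).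
have inv_uv : invc (u ** v) = d ** (u ** v).
  rewrite invMc !invc_nuclear_sqr -(mid_nuclear_assocl Nv) (mulc_nuclearCA _ _ Nu) vu.
  by rewrite /d -(mid_nuclear_assocl Nc) -(mid_nuclear_assocl Nv) !(mulc_nuclearCA _ _ Nc).
have := mulcV (u ** v); rewrite inv_uv (mulc_nuclearCA _ _ Nd) => /(congr1 (mul d)).
by rewrite nuclearK // mulx1.
Qed.

Lemma assoc_nuc_rel_xz x y z : nuc_rel x z -> x ** (y ** z) = (x ** y) ** z.
Proof. by case/nuc_relP=> a Na ->; rewrite !(mulc_nuclearCA _ _ Na) flexible. Qed.

Lemma assoc_nuc_rel_xy_z x y z : nuc_rel (x ** y) z -> x ** (y ** z) = (x ** y) ** z.
Proof. by case/nuc_relP=> a Na ->; rewrite !(mulc_nuclearCA _ _ Na) assoc_x_y_xy. Qed.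

Lemma card_quo_ge5 : ~ associative_op mul -> 4 < #|{: quo}|.
Proof.
move=> NA; rewrite ltnNge; apply: contra_notN NA => le4 x y z.
apply/eqP; apply: contraTT le4 => nassoc; rewrite -ltnNge.
have assocN (P : bool) : (P -> x ** (y ** z) = (x ** y) ** z) -> ~~ P.
  by move=> PA; apply: contra nassoc => /PA ->.
suff Us : uniq [:: quo1; qmap x; qmap y; qmap (x ** y); qmap z].
  by apply: uniq_leq_card Us _.
  rewrite /= !inE !negb_or !andbT !(eq_sym quo1) !qmap_eq1 !eq_qmap.
  have assoc_nucx : x \in nucleus mul -> x ** (y ** z) = (x ** y) ** z.
    by move=> Nx; apply: assoc_nuclear; rewrite Nx.
  have assoc_nucy : y \in nucleus mul -> x ** (y ** z) = (x ** y) ** z.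
    by move=> Ny; apply: assoc_nuclear; rewrite Ny orbT.
  apply/and4P; split; [apply/and4P | apply/and3P | apply/andP | ]; try split; apply: assocN.
  - exact: assoc_nucx.
  - exact: assoc_nucy.
  - by move/mul_nuclear_nuc_rel; apply: assoc_nuc_rel_xy.
  - by move=> Nz; apply: assoc_nuclear; rewrite Nz !orbT.
  - exact: assoc_nuc_rel_xy.
  - by move/nuc_rel_mull/assoc_nucy.
  - exact: assoc_nuc_rel_xz.
  - by move/nuc_rel_mulr/assoc_nucx.
  - exact: assoc_nuc_rel_yz.
  - exact: assoc_nuc_rel_xy_z.
Qed.
End SmallNucleus.

Lemma trivial_nucleus_Steiner : #|nucleus mul| = 1 -> is_Steiner_loop mul e.
Proof.
move=> N1; have Ne : nucleus mul = [set e].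
  by apply/eqP; rewrite eq_sym eqEcard sub1set nucleus1 N1 cards1.
have mulxx x : x ** x = e by apply/set1P; rewrite -Ne; apply/nucleusP/sqr_mid_nuclear.
have invcE x : invc x = x by apply: (@mulcI x); rewrite mulcV mulxx.
split=> [|x y]; first by case: HC.
by rewrite mulxx right_alternative mulxx mulx1 -[x ** y]invcE invMc !invcE.
Qed.
End CLoop.

Lemma nonassoc_C_loop_card_gt8 (T : finType) (mul : T -> T -> T) (e : T) :
  is_C_loop mul e -> ~ associative_op mul -> 8 < #|T|.
Proof.
move=> HC NA; rewrite ltnNge; apply/negP => le8.
have card_nq := card_quo HC; have q_gt2 := card_quo_ge3 HC NA.
have m_le2 : #|nucleus mul| <= 2 by move: le8; rewrite card_nq; nia.
have q_gt4 := card_quo_ge5 HC m_le2 NA.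
have m_gt0 : 0 < #|nucleus mul| by apply/card_gt0P; exists e; apply: nucleus1.
have m1 : #|nucleus mul| = 1 by move: le8; rewrite card_nq; nia.
have HS := trivial_nucleus_Steiner HC m1.
have n8 : #|T| = 8.
  have := steiner_card_mod6 HS; move: le8; rewrite card_nq m1; lia.
exact/NA/(steiner_card8_assoc HS).
Qed.

Definition V3 := (bool * bool * bool)%type.
Definition addV3 (u v : V3) : V3 :=
  let: (u0, u1, u2) := u in let: (v0, v1, v2) := v in (u0 (+) v0, u1 (+) v1, u2 (+) v2).
Definition cocycle (u v : V3) : bool :=
  let: (u0, u1, u2) := u in let: (v0, v1, v2) := v in
  [&& u0, v1 & v2] (+) [&& u1, v0 & v2] (+) [&& u2, v0 & v1].

(* The central extension of Z_2^3 by Z_2 with this cocycle is a nonassociative C-loop of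
   order 16; its laws are checked by exhaustion. *)
Definition C16 := (bool * V3)%type.
Definition mul16 (x y : C16) : C16 :=
  let: (a, u) := x in let: (b, v) := y in (a (+) b (+) cocycle u v, addV3 u v).
Definition e16 : C16 := (false, (false, false, false)).
Definition ldiv16 (x w : C16) : C16 :=
  let: (a, u) := x in let: (c, t) := w in
  let v := addV3 u t in (c (+) a (+) cocycle u v, v).
Definition rdiv16 (y w : C16) : C16 :=
  let: (b, v) := y in let: (c, t) := w in
  let u := addV3 t v in (c (+) b (+) cocycle u v, u).

Lemma C_law16 x y z : mul16 x (mul16 y (mul16 y z)) = mul16 (mul16 (mul16 x y) y) z.
Proof.
move: x y z => [a [[u0 u1] u2]] [b [[v0 v1] v2]] [c [[w0 w1] w2]].
by case: a; case: b; case: c; case: u0; case: u1; case: u2; case: v0; case: v1; case: v2;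
  case: w0; case: w1; case: w2.
Qed.

Lemma mul16K a : cancel (mul16 a) (ldiv16 a).
Proof.
move: a => [a [[u0 u1] u2]] [b [[v0 v1] v2]].
by case: a; case: b; case: u0; case: u1; case: u2; case: v0; case: v1; case: v2.
Qed.
Lemma ldiv16K a : cancel (ldiv16 a) (mul16 a).
Proof.
move: a => [a [[u0 u1] u2]] [b [[v0 v1] v2]].
by case: a; case: b; case: u0; case: u1; case: u2; case: v0; case: v1; case: v2.
Qed.
Lemma mul16Kr a : cancel (mul16^~ a) (rdiv16 a).
Proof.
move: a => [a [[u0 u1] u2]] [b [[v0 v1] v2]].
by case: a; case: b; case: u0; case: u1; case: u2; case: v0; case: v1; case: v2.
Qed.
Lemma rdiv16K a : cancel (rdiv16 a) (mul16^~ a).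
Proof.
move: a => [a [[u0 u1] u2]] [b [[v0 v1] v2]].
by case: a; case: b; case: u0; case: u1; case: u2; case: v0; case: v1; case: v2.
Qed.
Lemma mul16_1 x : mul16 e16 x = x /\ mul16 x e16 = x.
Proof. by move: x => [b [[v0 v1] v2]]; case: b; case: v0; case: v1; case: v2. Qed.

Section ElementaryAbelianExtension.
Variable j : nat.
Definition E2 := {ffun 'I_j -> bool}.
Definition addE2 (g h : E2) : E2 := [ffun i => g i (+) h i].
Definition C16E := (C16 * E2)%type.
Definition mulC16E (x y : C16E) : C16E := (mul16 x.1 y.1, addE2 x.2 y.2).
Definition zeroE2 : E2 := [ffun => false].
Definition eC16E : C16E := (e16, zeroE2).

Lemma addE2K g : cancel (addE2 g) (addE2 g).
Proof. by move=> h; apply/ffunP => i; rewrite !ffunE addbA addbb. Qed.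
Lemma addE2Kr g : cancel (addE2^~ g) (addE2^~ g).
Proof. by move=> h; apply/ffunP => i; rewrite !ffunE -addbA addbb addbF. Qed.

Lemma C_loop_C16E : is_C_loop mulC16E eC16E.
Proof.
split; last first.
  move=> [x g] [y h] [z k]; rewrite /mulC16E /= C_law16; congr pair.
  by apply/ffunP => i; rewrite !ffunE; case: (g i); case: (h i); case: (k i).
split; first by move=> [a g]; exists (fun w => (ldiv16 a w.1, addE2 g w.2)) => -[x h];
  rewrite /mulC16E /= ?mul16K ?ldiv16K ?addE2K.
split; first by move=> [a g]; exists (fun w => (rdiv16 a w.1, addE2^~ g w.2)) => -[x h];
  rewrite /mulC16E /= ?mul16Kr ?rdiv16K ?addE2Kr.
move=> [x g]; have [x1 x1r] := mul16_1 x.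
by split; congr pair; rewrite // /addE2; apply/ffunP => i; rewrite !ffunE ?addbF.
Qed.

Lemma nonassoc_C16E : ~ associative_op mulC16E.
Proof.
move=> /(_ (false, (false, false, true), zeroE2) (false, (false, true, false), zeroE2)
            (false, (true, false, false), zeroE2)).
by rewrite /mulC16E /= => -[].
Qed.

Lemma not_Steiner_C16E : ~ is_Steiner_loop mulC16E eC16E.
Proof.
case=> _ /(_ (false, (true, true, true), zeroE2) eC16E) [sqr _].
by move: sqr; rewrite /mulC16E /eC16E /= => -[].
Qed.

Lemma card_C16E : #|{: C16E}| = 2 ^ (4 + j).
Proof. by rewrite card_prod card_ffun card_ord card_bool !card_prod !card_bool expnD. Qed.
End ElementaryAbelianExtension.

Theorem proposition3p1 :
  (forall (T : finType) (mul : T -> T -> T) (e : T),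
     is_C_loop mul e -> ~ associative_op mul ->
     let n := #|T| in let m := #|nucleus mul| in
     [/\ (m %| n)%N /\ ((n %/ m) %% 6 = 2 \/ (n %/ m) %% 6 = 4)%N,
         ~~ odd n &
         forall p k : nat, prime p -> (0 < k)%N -> n = (p ^ k)%N ->
           p = 2 /\ (3 < k)%N])
  /\
  (forall k : nat, (3 < k)%N ->
     exists (T : finType) (mul : T -> T -> T) (e : T),
       [/\ is_C_loop mul e, ~ associative_op mul, #|T| = (2 ^ k)%N &
           ~ is_Steiner_loop mul e]).
Proof.
split=> [T mul e HC NA n m | k k_gt3]; last first.
  exists (C16E (k - 4)), (@mulC16E (k - 4)), (eC16E (k - 4)).
  rewrite card_C16E subnKC //.
  by split; [apply: C_loop_C16E | apply: nonassoc_C16E | | apply: not_Steiner_C16E].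
have HS := quo_Steiner HC.
have q_gt1 : 1 < #|{: quo mul e}| by apply: ltnW; apply: card_quo_ge3 HC NA.
have n_qm : n = #|{: quo mul e}| * m := card_quo HC.
have m_gt0 : 0 < m by apply/card_gt0P; exists e; apply: nucleus1.
have n_even : ~~ odd n by rewrite n_qm oddM negb_and (steiner_card_even HS).
split=> // [|p k p_pr k_gt0 n_pk].
  by rewrite n_qm dvdn_mull // mulnK //; split; last exact: steiner_card_mod6 HS q_gt1.
have p2 : p = 2.
  have : 2 %| p ^ k by rewrite -n_pk dvdn2.
  by rewrite Euclid_dvdX // k_gt0 andbT dvdn_prime2 // => /eqP.
split=> //; have := nonassoc_C_loop_card_gt8 HC NA; rewrite -/n n_pk p2.
by apply: contraTT; rewrite -!leqNgt => k_le3; rewrite -[8]/(2 ^ 3) leq_exp2l.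
Qed.
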